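(* Let $\Lambda=G_{K,L}$ be the $K\times L$ open grid with $K,L\ge2$, with its hard-core energy landscape. There exists a path $\omega^*$ from $\mathbf e$ to $\mathbf o$ in $\mathcal X$ such that $\max_{\sigma\in\omega^*}H(\sigma)-H(\mathbf e)=\lceil K/2\rceil+1$.
   Context: Open grid $G_{K,L}$: sites $(v_1,v_2)$ with $0\le v_1\le L-1$, $0\le v_2\le K-1$; $v,w$ adjacent iff $|v_1-w_1|+|v_2-w_2|=1$. Even sites: $v_1+v_2$ even. State space $\mathcal X$ = set of $\sigma\in\{0,1\}^\Lambda$ with $\sigma(v)\sigma(w)=0$ for adjacent $v,w$; $H(\sigma)=-\sum_v\sigma(v)$. A path is a finite sequence of configurations in $\mathcal X$ in which consecutive configurations differ in exactly one site (or coincide). $\mathbf e$ (resp. $\mathbf o$) has particles exactly at the even (resp. odd) sites. *)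

From mathcomp Require Import all_boot all_order all_algebra.
Set Implicit Arguments. Unset Strict Implicit. Unset Printing Implicit Defensive.
Import Order.TTheory GRing.Theory Num.Theory.

Definition site (K L : nat) : finType := ('I_L * 'I_K)%type.

Definition absdiff (a b : nat) : nat := ((a - b) + (b - a))%N.

Definition adj K L (v w : site K L) : bool :=
  (absdiff v.1 w.1 + absdiff v.2 w.2 == 1)%N.

(* A configuration sigma in {0,1}^Lambda is identified with its set of occupied sites. *)
Definition conf K L := {set site K L}.

Definition feasible K L (s : conf K L) : bool :=
  [forall v, forall w, adj v w ==> ~~ ((v \in s) && (w \in s))].

Definition H K L (s : conf K L) : int := - (#|s|%:Z).

Definition even_conf K L : conf K L := [set v : site K L | ~~ odd (v.1 + v.2)].
Definition odd_conf K L : conf K L := [set v : site K L | odd (v.1 + v.2)].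

Definition step K L (s t : conf K L) : bool := (#|(s :\: t) :|: (t :\: s)| <= 1)%N.

Definition is_path K L (a : conf K L) (s : seq (conf K L)) (b : conf K L) : Prop :=
  [/\ all (@feasible K L) (a :: s), path (@step K L) a s & last a s = b].

From mathcomp Require Import all_boot all_order all_algebra.
From mathcomp Require Import zify.
Import Order.TTheory GRing.Theory Num.Theory.

(* Number the sites row by row, [n = v1 * K + v2]: the parity of a site is that
   of [n %/ K + n %% K], and adjacent sites have opposite parities and indices
   at most [K] apart.  Hence [sweep a b], the even sites of index [>= a]
   together with the odd sites of index [< b], is feasible when [b + K <= a].
   The path first empties the even sites of index [< K] and then advances [a]
   and [b] alternately.  The energy of [sweep a b] above [e] is the number of
   even indices below [a] minus the number of odd indices below [b]; since a
   shift by [K] swaps parities, for [a <= K + b + 1] this is at most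
   [ceil(K/2) + 1], with equality at [a = K + 2], [b = 1]. *)

Set Implicit Arguments. Unset Strict Implicit.

Lemma count_iota0S (p : pred nat) n :
  count p (iota 0 n.+1) = count p (iota 0 n) + p n.
Proof. by rewrite -addn1 iotaD count_cat /= addn0. Qed.

Lemma count_iota0_mono (p : pred nat) m n : m <= n ->
  count p (iota 0 m) <= count p (iota 0 n).
Proof. by move=> /subnKC <-; rewrite iotaD count_cat leq_addr. Qed.

Lemma count_iota0_ltn (p : pred nat) a n :
  count (fun i => p i && (i < a)) (iota 0 n) = count p (iota 0 (minn a n)).
Proof.
rewrite -(count_filter p (gtn a)); congr count.
case: (leqP a n) => [le_an | /ltnW le_na].
  exact: (filter_iota_ltn 0 le_an).
rewrite -[RHS]filter_predT; apply: eq_in_filter => i.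
by rewrite mem_iota /= => lt_in; apply: leq_trans lt_in _.
Qed.

Lemma count_iota_sum (p : pred nat) m n : count p (iota m n) = \sum_(j < n) p (m + j).
Proof.
elim: n => [|n IHn]; first by rewrite big_ord0.
by rewrite big_ord_recr -IHn -{1}addn1 iotaD count_cat /= addn0.
Qed.

Lemma count_iota0_mul (p : pred nat) L K :
  count p (iota 0 (L * K)) = \sum_(i < L) \sum_(j < K) p (i * K + j).
Proof.
elim: L => [|L IHL]; first by rewrite big_ord0.
by rewrite mulSnr iotaD count_cat big_ord_recr /= IHL count_iota_sum.
Qed.

Lemma path_map_iota (T : Type) (r : rel T) (f : nat -> T) m n :
  (forall t, r (f t) (f t.+1)) -> path r (f m) (map f (iota m.+1 n)).
Proof. by move=> rf; elim: n m => //= n IHn m; rewrite rf IHn. Qed.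

Lemma last_iota m n : last m (iota m.+1 n) = m + n.
Proof. by elim: n m => [|n IHn] m /=; rewrite ?addn0 ?IHn ?addnS. Qed.

Lemma count_addn (T : Type) (p1 p2 q1 q2 : pred T) (s : seq T) :
  (forall x, p1 x + p2 x = q1 x + q2 x) ->
  count p1 s + count p2 s = count q1 s + count q2 s.
Proof. by move=> pq; elim: s => //= x s IHs; rewrite addnACA pq IHs addnACA. Qed.

Lemma count_even_iota0 n : count (fun i => ~~ odd i) (iota 0 n) = uphalf n.
Proof.
elim: n => [|n IHn] //; rewrite count_iota0S IHn uphalfE /= uphalf_half.
by case: (odd n); rewrite ?addn0 ?addn1.
Qed.

Section Colouring.

Variable K : nat.
Hypothesis K_gt0 : 0 < K.

Definition odd_at (n : nat) : bool := odd (n %/ K + n %% K).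

Definition evens n := count (predC odd_at) (iota 0 n).
Definition odds n := count odd_at (iota 0 n).

Lemma odd_at_small n : n < K -> odd_at n = odd n.
Proof. by move=> lt_nK; rewrite /odd_at divn_small // modn_small. Qed.

Lemma odd_at_addK n : odd_at (K + n) = ~~ odd_at n.
Proof.
by rewrite /odd_at -[K in K + n]mul1n divnMDl // modnMDl add1n addSn.
Qed.

Lemma evens_addK m : evens (K + m) = uphalf K + odds m.
Proof.
rewrite /evens iotaD count_cat -(count_even_iota0 K); congr (_ + _).
  by apply: eq_in_count => i; rewrite mem_iota /= => /odd_at_small->.
rewrite add0n -{1}(addn0 K) iotaDl count_map.
by apply: eq_count => i /=; rewrite odd_at_addK negbK.
Qed.

Lemma evens_le a b : a <= K + b + 1 -> evens a <= uphalf K + odds b + 1.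
Proof.
move=> le_a; apply: leq_trans (count_iota0_mono _ le_a) _.
rewrite -addnA addn1 -/(evens (K + b.+1)) evens_addK /odds count_iota0S.
by rewrite -!addnA !leq_add2l leq_b1.
Qed.

End Colouring.

Section Grid.

Variables K L : nat.
Implicit Types v w : site K L.

Definition site_index w : nat := w.1 * K + w.2.

Lemma site_index_div w : site_index w %/ K = w.1.
Proof.
have K_gt0 : 0 < K := leq_ltn_trans (leq0n _) (ltn_ord w.2).
by rewrite /site_index divnMDl // divn_small // addn0.
Qed.

Lemma site_index_mod w : site_index w %% K = w.2.
Proof. by rewrite modnMDl modn_small. Qed.

Lemma site_index_inj : injective site_index.
Proof.
move=> [v1 v2] [w1 w2] eq_vw; have := site_index_div (v1, v2).
have := site_index_mod (v1, v2); rewrite eq_vw site_index_div site_index_mod /=.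
by move=> /val_inj-> /val_inj->.
Qed.

Lemma site_index_lt w : site_index w < L * K.
Proof.
apply: (@leq_trans (w.1.+1 * K)); first by rewrite mulSnr ltn_add2l.
by rewrite leq_mul2r ltn_ord orbT.
Qed.

Lemma odd_at_site_index w : odd_at K (site_index w) = odd (w.1 + w.2).
Proof. by rewrite /odd_at site_index_div site_index_mod. Qed.

Lemma card_site_index (p : pred nat) :
  #|[set w | p (site_index w)]| = count p (iota 0 (L * K)).
Proof.
rewrite count_iota0_mul pair_bigA -sum1_card big_mkcond /=.
by apply: eq_bigr => w _; rewrite inE; case: (p _).
Qed.

Lemma adj_site_index v w : adj v w ->
  odd (v.1 + v.2) = ~~ odd (w.1 + w.2) /\
  site_index v <= site_index w + K /\ site_index w <= site_index v + K.
Proof.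
rewrite /adj /absdiff /site_index => /eqP.
case: v w => [[x1 _] [x2 lt_x2]] [[y1 _] [y2 lt_y2]] /= dist1.
have [[-> [->|->]]|[-> [->|->]]] : (x1 = y1 /\ (x2 = y2.+1 \/ y2 = x2.+1)) \/
                                   (x2 = y2 /\ (x1 = y1.+1 \/ y1 = x1.+1)) by lia.
all: by rewrite ?addnS ?addSn ?oddS ?negbK ?mulSn; split => //; lia.
Qed.

Lemma step_index (s t : conf K L) n :
  {in (s :\: t) :|: (t :\: s), forall z, site_index z = n} -> step s t.
Proof.
move=> index_n; apply/card_le1_eqP => x y /index_n index_x /index_n index_y.
by apply: site_index_inj; rewrite index_x index_y.
Qed.

Definition sweep (a b : nat) : conf K L :=
  [set w : site K L |
    if odd (w.1 + w.2) then site_index w < b else a <= site_index w].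

Lemma sweep_feasible a b : b = 0 \/ b + K <= a -> feasible (sweep a b).
Proof.
move=> ab; apply/forallP => v; apply/forallP => w; apply/implyP.
by case/adj_site_index => odd_v index_vw; rewrite !inE odd_v; case: (odd _) => /=; lia.
Qed.

Lemma step_sweepSl a b : step (sweep a b) (sweep a.+1 b).
Proof. by apply: (@step_index _ _ a) => z; rewrite !inE; case: (odd _) => /=; lia. Qed.

Lemma step_sweepSr a b : step (sweep a b) (sweep a b.+1).
Proof. by apply: (@step_index _ _ b) => z; rewrite !inE; case: (odd _) => /=; lia. Qed.

Lemma card_sweep a b :
  #|sweep a b| + evens K (minn a (L * K)) =
  #|even_conf K L| + odds K (minn b (L * K)).
Proof.
have -> : sweep a b = [set w | if odd_at K (site_index w) then site_index w < b
                               else a <= site_index w].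
  by apply/setP => w; rewrite !inE odd_at_site_index.
have -> : even_conf K L = [set w | ~~ odd_at K (site_index w)].
  by apply/setP => w; rewrite !inE odd_at_site_index.
rewrite /evens /odds -!count_iota0_ltn.
rewrite (card_site_index (predC (odd_at K))).
rewrite (card_site_index (fun n => if odd_at K n then n < b else a <= n)).
apply: count_addn => n /=; case: (odd_at K n); first by rewrite addnC.
by rewrite leqNgt; case: (n < a).
Qed.

Lemma sweep0 : sweep 0 0 = even_conf K L.
Proof. by apply/setP => w; rewrite !inE; case: (odd _). Qed.

Lemma sweep_full a b : L * K <= a -> L * K <= b -> sweep a b = odd_conf K L.
Proof.
move=> le_a le_b; apply/setP => w; have := site_index_lt w.
by rewrite !inE; case: (odd _) => /=; lia.
Qed.

Lemma card_even_le_sweep a b : 0 < K -> a <= K + b + 1 ->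
  #|even_conf K L| <= #|sweep a b| + (uphalf K + 1).
Proof.
move=> K_gt0 le_a; have := card_sweep a b.
have := @evens_le K K_gt0 (minn a (L * K)) (minn b (L * K)); lia.
Qed.

Lemma card_even_sweep_peak : 2 <= K -> 2 <= L ->
  #|even_conf K L| = #|sweep (K + 2) 1| + (uphalf K + 1).
Proof.
move=> le2K le2L; have := card_sweep (K + 2) 1.
have le_2K_N : 2 * K <= L * K by rewrite leq_mul2r le2L orbT.
have -> : minn (K + 2) (L * K) = K + 2 by lia.
have -> : minn 1 (L * K) = 1 by lia.
rewrite evens_addK; last by lia.
by rewrite /odds /= !odd_at_small //; lia.
Qed.

End Grid.

Section Schedule.

Variables K L : nat.

Definition sweep_at (t : nat) : conf K L :=
  sweep K L (minn t K + uphalf (t - K)) (t - K)./2.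

Lemma sweep_at_feasible t : feasible (sweep_at t).
Proof.
apply: sweep_feasible; case: (leqP K t) => [le_Kt | lt_tK].
  by right; rewrite uphalf_half; lia.
by left; have -> : t - K = 0 by lia.
Qed.

Lemma step_sweep_at t : step (sweep_at t) (sweep_at t.+1).
Proof.
rewrite /sweep_at; case: (leqP K t) => [le_Kt | lt_tK].
  have -> : t.+1 - K = (t - K).+1 by lia.
  rewrite !(minn_idPr _) ?(leqW le_Kt) // uphalfE /= uphalf_half.
  case: (odd (t - K)); rewrite ?add1n ?add0n; first exact: step_sweepSr.
  by rewrite addnS; apply: step_sweepSl.
have -> : t.+1 - K = 0 by lia.
have -> : t - K = 0 by lia.
by rewrite !(minn_idPl _) ?(ltnW lt_tK) //= !addn0; apply: step_sweepSl.
Qed.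

Lemma card_even_le_sweep_at t : 0 < K ->
  #|even_conf K L| <= #|sweep_at t| + (uphalf K + 1).
Proof. by move=> K_gt0; apply: card_even_le_sweep => //; rewrite uphalf_half; lia. Qed.

Lemma sweep_at0 : sweep_at 0 = even_conf K L.
Proof. by rewrite /sweep_at min0n sub0n; apply: sweep0. Qed.

Lemma sweep_at_end : 0 < K -> sweep_at (K + (L * K).*2) = odd_conf K L.
Proof.
move=> K_gt0; rewrite /sweep_at addKn uphalf_double doubleK.
by apply: sweep_full; lia.
Qed.

Lemma sweep_at_peak : sweep_at (K + 3) = sweep K L (K + 2) 1.
Proof. by rewrite /sweep_at addKn; have -> : minn (K + 3) K = K by lia. Qed.

End Schedule.

Local Open Scope ring_scope.

Theorem proposition5p10 (K L : nat) (hK : (2 <= K)%N) (hL : (2 <= L)%N) :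
  exists s : seq (conf K L),
    is_path (even_conf K L) s (odd_conf K L) /\
    (exists2 sg, sg \in even_conf K L :: s &
       H sg - H (even_conf K L) = (uphalf K + 1)%N%:Z) /\
    (forall sg, sg \in even_conf K L :: s ->
       H sg - H (even_conf K L) <= (uphalf K + 1)%N%:Z).
Proof.
have K_gt0 : (0 < K)%N by apply: leq_trans hK.
set M := (K + (L * K).*2)%N.
have le_K3_M : (K + 3 <= M)%N.
  by have := leq_mul hL (leqnn K); rewrite /M -mul2n; lia.
exists (map (@sweep_at K L) (iota 1 M)); rewrite -(sweep_at0 K L).
have in_path sg : sg \in sweep_at K L 0 :: map (@sweep_at K L) (iota 1 M) ->
    exists t, sg = sweep_at K L t by rewrite -map_cons => /mapP[t _ ->]; exists t.
split; [|split].
- split.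
  + by apply/allP => sg /in_path[t ->]; apply: sweep_at_feasible.
  + by apply: path_map_iota => t; apply: step_sweep_at.
  + by rewrite last_map last_iota add0n sweep_at_end.
- exists (sweep_at K L (K + 3)).
    by rewrite inE map_f ?orbT // mem_iota; lia.
  by rewrite sweep_at_peak sweep_at0 /H (card_even_sweep_peak hK hL); lia.
- move=> sg /in_path[t ->]; rewrite sweep_at0 /H.
  by have := card_even_le_sweep_at L t K_gt0; lia.
Qed.
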